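(* Let $\mathbf{P}=\{p_n(x)\}_{n\ge0}$ be the Sheffer sequence for the pair $(g(t),f(t))$. Then, as formal power series in $t$ (with coefficients rational functions of $x$), $$\sum_{n=0}^{\infty}A_n(x;\mathbf{P})\frac{t^n}{n!}=\frac{(1-x)\,e^{\bar f((1-x)t)}}{g\big(\bar f((1-x)t)\big)}\cdot\frac{1}{1-x\,e^{\bar f((1-x)t)}}.$$
   Context: $g,f$ are formal power series over $\mathbb{C}$ with $g(0)\ne0$, $f(0)=0$, $f'(0)\ne0$; $\bar f$ is the compositional inverse of $f$. $\{p_n\}$ is Sheffer for $(g,f)$ iff $\sum_{n\ge0}p_n(x)\frac{t^n}{n!}=\frac{1}{g(\bar f(t))}e^{x\bar f(t)}$. The Eulerian numbers $A_{n,k}(\mathbf{P})$ ($0\le k\le n$) are the unique coefficients with $p_n(x)=\sum_{k=0}^{n}A_{n,k}(\mathbf{P})\binom{x+n-k-1}{n}$, where $\binom{y}{n}=y(y-1)\cdots(y-n+1)/n!$, and $A_n(x;\mathbf{P})=\sum_{k=0}^n A_{n,k}(\mathbf{P})x^k$. *)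

From HB Require Import structures.
From mathcomp Require Import all_boot all_order all_algebra.
Set Implicit Arguments. Unset Strict Implicit. Unset Printing Implicit Defensive.
Import Order.TTheory GRing.Theory Num.Theory.
Local Open Scope ring_scope.

(* Formal power series over a commutative ring R, represented by their
   coefficient sequence: a : nat -> R stands for \sum_n a n t^n. *)
Section FPS.
Variable R : comUnitRingType.

Definition fX : nat -> R := fun n => (n == 1%N)%:R.
Definition fconst (c : R) : nat -> R := fun n => if n == 0%N then c else 0.
Definition fadd (a b : nat -> R) : nat -> R := fun n => a n + b n.
Definition fsub (a b : nat -> R) : nat -> R := fun n => a n - b n.
Definition fscale (c : R) (a : nat -> R) : nat -> R := fun n => c * a n.
Definition fmul (a b : nat -> R) : nat -> R :=
  fun n => \sum_(i < n.+1) a i * b (n - i)%N.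
Fixpoint fpow (a : nat -> R) (k : nat) : nat -> R :=
  match k with 0%N => fconst 1 | k'.+1 => fmul a (fpow a k') end.
(* composition a(h(t)), meaningful when h(0) = 0 *)
Definition fcomp (a h : nat -> R) : nat -> R :=
  fun n => \sum_(k < n.+1) a k * fpow h k n.
(* the exponential series e^t = \sum t^k / k! ; e^{h} is fcomp fexp h *)
Definition fexp : nat -> R := fun k => (k`!%:R)^-1.
(* multiplicative inverse 1/a of a series whose constant term is a unit:
   b_0 = a_0^-1, b_n = - a_0^-1 * \sum_{k=1}^n a_k b_{n-k} *)
Fixpoint fps_inv_seq (a : nat -> R) (n : nat) : seq R :=
  match n with
  | 0%N => [:: (a 0%N)^-1]
  | m.+1 => let s := fps_inv_seq a m in
            rcons s (- (a 0%N)^-1 *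
                     \sum_(1 <= k < m.+2) a k * nth 0 s (m.+1 - k)%N)
  end.
Definition fps_inv (a : nat -> R) : nat -> R := fun n => nth 0 (fps_inv_seq a n) n.
End FPS.

Definition fmap (R S : Type) (phi : R -> S) (a : nat -> R) : nat -> S :=
  fun n => phi (a n).

Definition is_comp_inverse (C : comUnitRingType) (f fb : nat -> C) : Prop :=
  fb 0%N = 0 /\ fcomp f fb = fX C /\ fcomp fb f = fX C.

(* Sheffer sequence for (g, f):
   \sum_n p_n(x) t^n/n! = 1/g(fbar(t)) * e^{x fbar(t)}, computed in {poly C}[[t]] *)
Definition is_sheffer (C : fieldType) (g f : nat -> C) (p : nat -> {poly C}) : Prop :=
  forall fb : nat -> C, is_comp_inverse f fb ->
  forall n : nat,
    (n`!%:R)^-1 * p n =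
    fmul (fps_inv (fmap polyC (fcomp g fb)))
         (fcomp (fexp _) (fun m => 'X * (fb m)%:P)) n.

Definition binpoly (C : fieldType) (y : {poly C}) (n : nat) : {poly C} :=
  (n`!%:R)^-1 *: \prod_(i < n) (y - (i%:R)%:P).

Definition is_eulerian (C : fieldType) (p : nat -> {poly C}) (A : nat -> nat -> C) : Prop :=
  forall n : nat,
    p n = \sum_(k < n.+1) A n k *: binpoly ('X + (n%:R - k%:R - 1)%:P) n.

Definition eulerian_poly (C : fieldType) (A : nat -> nat -> C) (n : nat) : {poly C} :=
  \sum_(k < n.+1) A n k *: 'X^k.

From HB Require Import structures.
From mathcomp Require Import all_boot all_order all_algebra.
From mathcomp Require Import fraction zify ring.
From mathcomp Require Import boolp.
Import Order.TTheory GRing.Theory Num.Theory FracField.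

Set Implicit Arguments.
Unset Strict Implicit.
Unset Printing Implicit Defensive.

Local Open Scope ring_scope.

(* Let Q(t) = e^(x fb(t)) / g(fb(t)) = \sum_n p_n(x) t^n / n!.  Replacing x by
   x + 1 in the coefficients multiplies Q by e^(fb(t)), so the j-th forward
   difference in x of Q is (e^fb - 1)^j Q.  On the Eulerian side, the j-th
   difference of binom(x + n - k - 1, n) is binom(x + n - k - 1, n - j), whose
   value at x = 1 is C(n - k, n - j).  Evaluating at x = 1 and substituting
   t -> (1 - x) t, with E = e^(fb((1-x)t)) and G = 1 / g(fb((1-x)t)), the
   identity \sum_j (x/(1-x))^j (1-x)^n C(n - k, n - j) = x^k shows that the
   Eulerian generating function is \sum_j z^j G E with z = x/(1-x) (E - 1);
   summing this geometric series, 1 - z = (1 - x E) / (1 - x), gives the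
   claimed closed form. *)

Section FormalPowerSeries.
Variable R : comUnitRingType.

Definition fps := nat -> R.
HB.instance Definition _ := gen_eqMixin fps.
HB.instance Definition _ := gen_choiceMixin fps.

Definition fps_trunc n (a : nat -> R) : {poly R} := \poly_(i < n.+1) a i.

Lemma coef_fps_trunc n a i : (i <= n)%N -> (fps_trunc n a)`_i = a i.
Proof. by move=> le_in; rewrite coef_poly ltnS le_in. Qed.

(* The n-th coefficient of a Cauchy product only sees coefficients of index
   at most n, so it can be computed in {poly R}. *)
Lemma fmul_coef_poly (a b : nat -> R) (pa pb : {poly R}) n :
  (forall i, (i <= n)%N -> pa`_i = a i) -> (forall i, (i <= n)%N -> pb`_i = b i) ->
  fmul a b n = (pa * pb)`_n.
Proof.
move=> ha hb; rewrite coefM /fmul; apply: eq_bigr => i _.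
by rewrite ha ?hb // ?leq_subr // -ltnS.
Qed.

Lemma fmul_trunc (a b : nat -> R) n i : (i <= n)%N ->
  fmul a b i = (fps_trunc n a * fps_trunc n b)`_i.
Proof.
by move=> le_in; apply: fmul_coef_poly => j le_ji;
   rewrite coef_fps_trunc // (leq_trans le_ji le_in).
Qed.

Lemma fps_mulC : commutative (@fmul R).
Proof. by move=> a b; apply: funext => n; rewrite (fmul_trunc a b (leqnn n)) (fmul_trunc b a (leqnn n)) mulrC. Qed.

Lemma fps_mulA : associative (@fmul R).
Proof.
move=> a b c; apply: funext => n.
rewrite (fmul_coef_poly (coef_fps_trunc (n:=n) a) (fun i hi => esym (fmul_trunc b c hi))).
by rewrite (fmul_coef_poly (fun i hi => esym (fmul_trunc a b hi)) (coef_fps_trunc (n:=n) c)) mulrA.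
Qed.

Lemma fps_addA : associative (@fadd R).
Proof. by move=> a b c; apply: funext => n; rewrite /fadd addrA. Qed.

Lemma fps_addC : commutative (@fadd R).
Proof. by move=> a b; apply: funext => n; rewrite /fadd addrC. Qed.

Lemma fps_add0 : left_id (fconst 0 : fps) (@fadd R).
Proof. by move=> a; apply: funext => -[|n]; rewrite /fadd /fconst /= add0r. Qed.

Lemma fps_addN : left_inverse (fconst 0 : fps) (fun a n => - a n) (@fadd R).
Proof. by move=> a; apply: funext => -[|n]; rewrite /fadd /fconst /= addNr. Qed.

HB.instance Definition _ := GRing.isZmodule.Build fps fps_addA fps_addC fps_add0 fps_addN.

Lemma fps_mul1 : left_id (fconst 1 : fps) (@fmul R).
Proof.
move=> a; apply: funext => n; rewrite /fmul big_ord_recl /fconst /= mul1r subn0.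
by rewrite big1 ?addr0 // => i _; rewrite mul0r.
Qed.

Lemma fps_mulDl : left_distributive (@fmul R) (@fadd R).
Proof.
move=> a b c; apply: funext => n; rewrite /fmul /fadd -big_split /=.
by apply: eq_bigr => i _; rewrite mulrDl.
Qed.

Lemma fps_one_neq0 : (fconst 1 : fps) != fconst 0.
Proof. by apply/eqP => /(congr1 (fun a => a 0%N)) /eqP; rewrite /fconst oner_eq0. Qed.

HB.instance Definition _ :=
  GRing.Zmodule_isComNzRing.Build fps fps_mulA fps_mulC fps_mul1 fps_mulDl fps_one_neq0.

Definition fpsC (c : R) : fps := fconst c.

Lemma fmulE (a b : nat -> R) : fmul a b = (a : fps) * b. Proof. by []. Qed.

Lemma fpowE (a : nat -> R) k : fpow a k = (a : fps) ^+ k.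
Proof. by elim: k => //= k ->; rewrite exprS. Qed.

Lemma coef_fps_mul (a b : fps) n : (a * b) n = \sum_(i < n.+1) a i * b (n - i)%N.
Proof. by []. Qed.

Lemma coef_fps_add (a b : fps) n : (a + b) n = a n + b n. Proof. by []. Qed.

Lemma coef_fps_sub (a b : fps) n : (a - b) n = a n - b n. Proof. by []. Qed.

Lemma coef_fps0 n : (0 : fps) n = 0. Proof. by case: n. Qed.

Lemma coef_fps1 n : (1 : fps) n = (n == 0%N)%:R. Proof. by case: n. Qed.

Lemma coef_fps_sum I (r : seq I) (P : pred I) (F : I -> fps) n :
  (\sum_(i <- r | P i) F i) n = \sum_(i <- r | P i) F i n.
Proof. exact: (big_morph (fun a : fps => a n) (fun a b => coef_fps_add a b n) (coef_fps0 n)). Qed.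

Lemma coef_fps_mulrn (a : fps) m n : (a *+ m) n = a n *+ m.
Proof. by elim: m => [|m IH]; rewrite ?mulr0n ?coef_fps0 // !mulrS coef_fps_add IH. Qed.

Lemma coef_fpsCM c (a : fps) n : (fpsC c * a) n = c * a n.
Proof.
rewrite coef_fps_mul big_ord_recl /fpsC /fconst /= subn0.
by rewrite big1 ?addr0 // => i _; rewrite mul0r.
Qed.

Lemma fpsCM c d : fpsC c * fpsC d = fpsC (c * d).
Proof. by apply: funext => n; rewrite coef_fpsCM /fpsC /fconst; case: (n == 0%N); rewrite ?mulr0. Qed.

Lemma fpsCB c d : fpsC (c - d) = fpsC c - fpsC d.
Proof. by apply: funext => n; rewrite coef_fps_sub /fpsC /fconst; case: (n == 0%N); rewrite ?subr0. Qed.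

Lemma fpsCX c j : fpsC (c ^+ j) = fpsC c ^+ j.
Proof. by elim: j => // j IH; rewrite !exprS -fpsCM IH. Qed.

Lemma fscaleE c (a : nat -> R) : fscale c a = fpsC c * (a : fps).
Proof. by apply: funext => n; rewrite coef_fpsCM. Qed.

Lemma coef_fps_mul_eq (a a' b b' : fps) n : (forall i, (i <= n)%N -> a i = a' i) ->
  (forall i, (i <= n)%N -> b i = b' i) -> (a * b) n = (a' * b') n.
Proof.
move=> ha hb; apply: eq_bigr => i _; have le_in : (i <= n)%N by rewrite -ltnS.
by rewrite ha // hb // leq_subr.
Qed.

Lemma coef_fX_mul (a : fps) n : ((fX R : fps) * a) n = if n is n'.+1 then a n' else 0.
Proof.
rewrite coef_fps_mul; case: n => [|n]; first by rewrite big_ord1 /fX /= mul0r.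
rewrite big_ord_recl /fX /= mul0r add0r big_ord_recl /= mul1r subSS subn0.
by rewrite big1 ?addr0 // => i _; rewrite mul0r.
Qed.

Lemma coef_fX_exp k n : ((fX R : fps) ^+ k) n = (n == k)%:R.
Proof.
elim: k n => [|k IH] n; first by rewrite expr0 coef_fps1.
by rewrite exprS coef_fX_mul; case: n => [|n] //; rewrite IH.
Qed.

Definition vanishes_below k (a : fps) := forall i, (i < k)%N -> a i = 0.

Lemma vanishes_below_mul i j (a b : fps) :
  vanishes_below i a -> vanishes_below j b -> vanishes_below (i + j) (a * b).
Proof.
move=> ha hb n lt_n; rewrite coef_fps_mul big1 // => l _.
have [lt_li|le_il] := ltnP l i; first by rewrite ha // mul0r.
by rewrite hb ?mulr0 //; move: (ltn_ord l) lt_n le_il; rewrite ltnS; lia.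
Qed.

Lemma vanishes_below_mulr k (a b : fps) : vanishes_below k a -> vanishes_below k (a * b).
Proof. by move=> ha; rewrite -[k]addn0; apply: vanishes_below_mul. Qed.

Lemma vanishes_below_exp (a : fps) k : a 0%N = 0 -> vanishes_below k (a ^+ k).
Proof.
move=> a0; elim: k => [|k IH] //; rewrite exprS -add1n.
by apply: vanishes_below_mul => // -[].
Qed.

Lemma fcompE (a : nat -> R) h n :
  fcomp a h n = \sum_(k < n.+1) a k * ((h : fps) ^+ k) n.
Proof. by apply: eq_bigr => k _; rewrite fpowE. Qed.

Lemma fcomp0 (a h : nat -> R) : fcomp a h 0%N = a 0%N.
Proof. by rewrite /fcomp big_ord1 /fconst /= mulr1. Qed.

Lemma fcomp_fX (a : nat -> R) : fcomp a (fX R) = a.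
Proof.
apply: funext => n; rewrite fcompE big_ord_recr /= coef_fX_exp eqxx mulr1 big1 ?add0r //.
by move=> i _; rewrite coef_fX_exp (gtn_eqF (ltn_ord i)) mulr0.
Qed.

(* Since h(0) = 0, the terms of index k > n do not contribute to the n-th coefficient. *)
Lemma fcomp_big (a : nat -> R) (h : fps) n M : h 0%N = 0 -> (n < M)%N ->
  fcomp a h n = \sum_(k < M) a k * (h ^+ k) n.
Proof.
move=> h0 lt_nM; rewrite fcompE -!(big_mkord xpredT (fun k => a k * (h ^+ k) n)).
rewrite (@big_cat_nat _ _ _ n.+1 0 M _ _ (leq0n _) lt_nM) /= [X in _ = _ + X]big1_seq ?addr0 //.
move=> i /andP[_]; rewrite mem_index_iota => /andP[lt_ni _].
by rewrite (vanishes_below_exp h0 lt_ni) mulr0.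
Qed.

Lemma size_fps_inv_seq (a : nat -> R) m : size (fps_inv_seq a m) = m.+1.
Proof. by elim: m => //= m IH; rewrite size_rcons IH. Qed.

Lemma nth_fps_inv_seq (a : nat -> R) m i : (i <= m)%N ->
  nth 0 (fps_inv_seq a m) i = fps_inv a i.
Proof.
elim: m => [|m IH]; first by rewrite leqn0 => /eqP ->.
rewrite leq_eqVlt => /orP[/eqP -> //|lt_im].
by rewrite /= nth_rcons size_fps_inv_seq lt_im IH.
Qed.

Lemma fps_invS (a : nat -> R) m : fps_inv a m.+1 =
  - (a 0%N)^-1 * \sum_(1 <= k < m.+2) a k * fps_inv a (m.+1 - k).
Proof.
rewrite {1}/fps_inv /= nth_rcons size_fps_inv_seq ltnn eqxx; congr (_ * _).
rewrite !big_nat; apply: eq_bigr => k /andP[lt0k _]; rewrite nth_fps_inv_seq //.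
by rewrite leq_subLR -add1n leq_add2r.
Qed.

Lemma fps_invP (a : fps) : a 0%N \is a GRing.unit -> a * fps_inv a = 1.
Proof.
move=> a0U; apply: funext => -[|m]; first by rewrite coef_fps_mul big_ord1 /fps_inv /= mulrV.
rewrite coef_fps_mul coef_fps1 big_ord_recl /= subn0 fps_invS mulrA mulrN mulrV // mulN1r.
by rewrite big_add1 /= big_mkord addrC subrr.
Qed.

Lemma fps_inv_unique (a b : fps) : a 0%N \is a GRing.unit -> a * b = 1 -> b = fps_inv a.
Proof. by move=> a0U ab1; rewrite -[b]mul1r -(fps_invP a0U) mulrAC ab1 mul1r. Qed.

End FormalPowerSeries.

Lemma rmorph_fps_inv (R S : comUnitRingType) (F : {rmorphism fps R -> fps S}) (a : fps R) :
  a 0%N \is a GRing.unit -> F a 0%N \is a GRing.unit -> F (fps_inv a) = fps_inv (F a).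
Proof. by move=> a0U Fa0U; apply: fps_inv_unique => //; rewrite -rmorphM fps_invP ?rmorph1. Qed.

Section MapFps.
Variables (R S : comUnitRingType) (phi : {rmorphism R -> S}).

Definition map_fps (a : fps R) : fps S := fmap phi a.

Lemma map_fps_is_zmod_morphism : zmod_morphism map_fps.
Proof. by move=> a b; apply: funext => n; rewrite /map_fps /fmap /= rmorphB. Qed.

Lemma map_fps_is_monoid_morphism : monoid_morphism map_fps.
Proof.
split; first by apply: funext => n; rewrite /map_fps /fmap !coef_fps1 rmorph_nat.
move=> a b; apply: funext => n; rewrite /map_fps /fmap /= /fmul rmorph_sum.
by apply: eq_bigr => i _; rewrite rmorphM.
Qed.

HB.instance Definition _ := GRing.isZmodMorphism.Build _ _ map_fps map_fps_is_zmod_morphism.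
HB.instance Definition _ := GRing.isMonoidMorphism.Build _ _ map_fps map_fps_is_monoid_morphism.

Lemma coef_map_fps a n : map_fps a n = phi (a n). Proof. by []. Qed.

Lemma map_fps_fcomp (a : nat -> R) (h : fps R) :
  map_fps (fcomp a h) = fcomp (fmap phi a) (map_fps h).
Proof.
apply: funext => n; rewrite coef_map_fps !fcompE rmorph_sum; apply: eq_bigr => k _.
by rewrite rmorphM -rmorphXn.
Qed.

Lemma fmap_fexp : (forall k, (k`!%:R : R) \is a GRing.unit) -> fmap phi (fexp R) = fexp S.
Proof. by move=> factU; apply: funext => k; rewrite /fmap /fexp rmorphV // rmorph_nat. Qed.

End MapFps.

Section RescaleFps.
Variables (R : comUnitRingType) (c : R).

Definition rescale_fps (a : fps R) : fps R := fun n => c ^+ n * a n.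

Lemma rescale_fps_is_zmod_morphism : zmod_morphism rescale_fps.
Proof. by move=> a b; apply: funext => n; rewrite /rescale_fps coef_fps_sub mulrBr. Qed.

Lemma rescale_fps_is_monoid_morphism : monoid_morphism rescale_fps.
Proof.
split; first by apply: funext => -[|n]; rewrite /rescale_fps coef_fps1 ?mulr1 ?mulr0.
move=> a b; apply: funext => n; rewrite /rescale_fps !coef_fps_mul mulr_sumr.
by apply: eq_bigr => i _; rewrite mulrACA -exprD subnKC // -ltnS.
Qed.

HB.instance Definition _ :=
  GRing.isZmodMorphism.Build _ _ rescale_fps rescale_fps_is_zmod_morphism.
HB.instance Definition _ :=
  GRing.isMonoidMorphism.Build _ _ rescale_fps rescale_fps_is_monoid_morphism.

Lemma coef_rescale_fps a n : rescale_fps a n = c ^+ n * a n. Proof. by []. Qed.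

Lemma rescale_fps_fcomp (a : nat -> R) (h : fps R) :
  rescale_fps (fcomp a h) = fcomp a (rescale_fps h).
Proof.
apply: funext => n; rewrite coef_rescale_fps !fcompE mulr_sumr; apply: eq_bigr => k _.
by rewrite -rmorphXn /= /rescale_fps mulrCA.
Qed.

Lemma rescale_fps_fX : rescale_fps (fX R) = fscale c (fX R).
Proof. by apply: funext => -[|[|n]]; rewrite /rescale_fps /fscale /fX /= ?mulr0 ?expr1. Qed.

End RescaleFps.

Lemma sum_antidiagonals (V : zmodType) (F : nat -> nat -> V) N :
  \sum_(0 <= k < N.+1) \sum_(0 <= i < k.+1) F (k - i)%N i =
  \sum_(0 <= p < N.+1) \sum_(0 <= q < N.+1 - p) F p q.
Proof.
elim: N => [|N IH]; first by rewrite big_nat1 big_nat1 big_nat1 subn0 big_nat1.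
rewrite big_nat_recr //= IH [RHS]big_nat_recr //= subSnn big_nat1.
have -> : \sum_(0 <= i < N.+1) \sum_(0 <= q < N.+2 - i) F i q =
          \sum_(0 <= i < N.+1) (\sum_(0 <= q < N.+1 - i) F i q + F i (N.+1 - i)%N).
  by apply: eq_big_nat => i /andP[_ lt_iN]; rewrite (subSn (ltnW lt_iN)) big_nat_recr.
rewrite big_split /= -addrA; congr (_ + _).
rewrite big_nat_rev big_nat_recr //= add0n subnn subn0; congr (_ + _).
by apply: eq_big_nat => i /andP[_ lt_iN]; rewrite subSS; congr (F _ _); lia.
Qed.

Section ExpAdd.
Variable R : comUnitRingType.
Hypothesis fact_unit : forall k, (k`!%:R : R) \is a GRing.unit.

Lemma fexp_binomial k i : (i <= k)%N ->
  fexp R k * 'C(k, i)%:R = fexp R (k - i)%N * fexp R i.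
Proof.
move=> le_ik; rewrite /fexp -(bin_fact le_ik) !natrM.
have := fact_unit k; rewrite -(bin_fact le_ik) !natrM !unitrM => /andP[binU /andP[U1 U2]].
by rewrite invrM ?unitrM ?U1 ?U2 // divrK // invrM // mulrC.
Qed.

Definition fexp_trunc n (h : fps R) : fps R := \sum_(k < n.+1) fpsC (fexp R k) * h ^+ k.

Lemma coef_fexp_trunc n (h : fps R) i : h 0%N = 0 -> (i <= n)%N ->
  fcomp (fexp R) h i = fexp_trunc n h i.
Proof.
move=> h0 le_in; rewrite (fcomp_big _ h0 (leq_ltn_trans le_in (ltnSn n))) /fexp_trunc coef_fps_sum.
by apply: eq_bigr => k _; rewrite coef_fpsCM.
Qed.

(* Expand (a + b)^k binomially and regroup the double sum by total degree. *)
Lemma fexpD (a b : fps R) : a 0%N = 0 -> b 0%N = 0 ->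
  fcomp (fexp R) (a + b) = (fcomp (fexp R) a : fps R) * fcomp (fexp R) b.
Proof.
move=> a0 b0; have ab0 : (a + b) 0%N = 0 by rewrite coef_fps_add a0 b0 addr0.
apply: funext => n.
rewrite (coef_fexp_trunc ab0 (leqnn n)).
rewrite (@coef_fps_mul_eq _ _ (fexp_trunc n a) _ (fexp_trunc n b)); last 2 first.
- by move=> i le_in; rewrite (coef_fexp_trunc a0 le_in).
- by move=> i le_in; rewrite (coef_fexp_trunc b0 le_in).
pose G p q := fexp R p * fexp R q * (a ^+ p * b ^+ q) n.
have -> : fexp_trunc n (a + b) n = \sum_(0 <= k < n.+1) \sum_(0 <= i < k.+1) G (k - i)%N i.
  rewrite /fexp_trunc coef_fps_sum big_mkord; apply: eq_bigr => k _.
  rewrite coef_fpsCM exprDn coef_fps_sum mulr_sumr big_mkord; apply: eq_bigr => i _.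
  by rewrite coef_fps_mulrn -mulr_natr mulrCA fexp_binomial -1?ltnS // mulrC.
have -> : (fexp_trunc n a * fexp_trunc n b) n =
          \sum_(0 <= p < n.+1) \sum_(0 <= q < n.+1) G p q.
  rewrite /fexp_trunc mulr_suml coef_fps_sum big_mkord; apply: eq_bigr => p _.
  rewrite mulr_sumr coef_fps_sum big_mkord; apply: eq_bigr => q _.
  by rewrite mulrACA fpsCM coef_fpsCM.
rewrite sum_antidiagonals; apply: eq_big_nat => p /andP[_ lt_pn].
rewrite (@big_cat_nat _ _ _ (n.+1 - p)%N 0 n.+1) ?leq_subr //=.
rewrite [X in _ = _ + X]big_nat_cond [X in _ = _ + X]big1 ?addr0 // => q /andP[/andP[le_q _] _].
rewrite /G (vanishes_below_mul (@vanishes_below_exp _ _ p a0) (@vanishes_below_exp _ _ q b0)) ?mulr0 //.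
lia.
Qed.

End ExpAdd.

Section ForwardDifference.
Variable F : numFieldType.
Implicit Types (p : {poly F}) (c : F).

Definition fwd_diff p : {poly F} := p \Po ('X + 1) - p.

Lemma iter_fwd_diff_sum j (I : Type) (r : seq I) (a : I -> F) (q : I -> {poly F}) :
  iter j fwd_diff (\sum_(i <- r) a i *: q i) = \sum_(i <- r) a i *: iter j fwd_diff (q i).
Proof.
elim: j => //= j ->; rewrite /fwd_diff (raddf_sum (comp_poly ('X + 1))) -sumrB.
by apply: eq_bigr => i _; rewrite /= comp_polyZ scalerBr.
Qed.

Lemma iter_fwd_diffZ j c p : iter j fwd_diff (c *: p) = c *: iter j fwd_diff p.
Proof. by have := iter_fwd_diff_sum j [:: tt] (fun _ => c) (fun _ => p); rewrite !big_seq1. Qed.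

Lemma fwd_diffC c : fwd_diff c%:P = 0.
Proof. by rewrite /fwd_diff comp_polyC subrr. Qed.

Lemma natf_fact_neq0 m : (m`!%:R : F) != 0.
Proof. by rewrite pnatr_eq0 -lt0n fact_gt0. Qed.

Lemma binpoly0 (y : {poly F}) : binpoly y 0 = 1.
Proof. by rewrite /binpoly big_ord0 invr1 scale1r. Qed.

Lemma fwd_diff_binpoly c m :
  fwd_diff (binpoly ('X + c%:P) m.+1) = binpoly ('X + c%:P) m.
Proof.
rewrite /fwd_diff /binpoly comp_polyZ (rmorph_prod (comp_poly ('X + 1))) /=.
set y := 'X + c%:P.
rewrite (eq_bigr (fun i : 'I_m.+1 => y + 1 - (i%:R)%:P)); last first.
  move=> i _; rewrite /y raddfB /= comp_polyD !comp_polyC comp_polyX.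
  by congr (_ - _); rewrite addrAC.
rewrite big_ord_recl /= subr0.
have -> : \prod_(i < m) (y + 1 - ((bump 0 i)%:R)%:P) = \prod_(i < m) (y - (i%:R)%:P).
  apply: eq_bigr => i _; rewrite /bump /= add1n -addn1 natrD rmorphD rmorph1 /=.
  by ring.
rewrite big_ord_recr /= -scalerBr [X in _ - X]mulrC -mulrBl.
have -> : y + 1 - (y - (m%:R)%:P) = (m.+1%:R)%:P.
  by rewrite opprB addrC subrKA -natr1 rmorphD rmorph1 addrC.
rewrite mul_polyC scalerA factS natrM invrM ?unitfE ?natf_fact_neq0 ?pnatr_eq0 //.
by rewrite -mulrA mulVf ?pnatr_eq0 // mulr1.
Qed.

Lemma iter_fwd_diff_binpoly c n j :
  iter j fwd_diff (binpoly ('X + c%:P) n) =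
  if (j <= n)%N then binpoly ('X + c%:P) (n - j) else 0.
Proof.
elim: j => [|j IH]; first by rewrite subn0.
rewrite iterS IH; case: (ltngtP j n) => [lt_jn|lt_nj|->] /=.
- by rewrite (_ : (n - j = (n - j.+1).+1)%N) ?fwd_diff_binpoly //; lia.
- by rewrite -(rmorph0 (@polyC F)) fwd_diffC.
- by rewrite subnn binpoly0 -(rmorph1 (@polyC F)) fwd_diffC.
Qed.

Lemma binomial_prod (a m : nat) :
  ('C(a, m)%:R : F) = (m`!%:R)^-1 * \prod_(i < m) (a%:R - i%:R).
Proof.
have [le_ma|lt_am] := leqP m a; last first.
  by rewrite bin_small // (bigD1 (Ordinal lt_am)) //= subrr mul0r mulr0.
apply: (mulfI (natf_fact_neq0 m)); rewrite mulrA mulfV ?natf_fact_neq0 // mul1r.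
rewrite -natrM mulnC bin_ffact ffact_prod natr_prod; apply: eq_bigr => i _.
by rewrite natrB // (leq_trans (ltnW (ltn_ord i)) le_ma).
Qed.

Lemma horner_binpoly1 (n k m : nat) : (k <= n)%N ->
  (binpoly ('X + (n%:R - k%:R - 1 : F)%:P) m).[1] = 'C(n - k, m)%:R.
Proof.
move=> le_kn; rewrite binomial_prod /binpoly hornerZ horner_prod; congr (_ * _).
by apply: eq_bigr => i _; rewrite hornerD hornerN hornerD hornerX !hornerC natrB //; ring.
Qed.

End ForwardDifference.

(* With y = x / (1 - x): only j in [k, n] contribute, and reindexing by j - k
   turns the sum into x^k ((1 - x) + x)^(n - k). *)
Lemma sum_binomial_ratio (F : fieldType) (x : F) (n k N : nat) : 1 - x != 0 ->
  (k <= n)%N -> (n <= N)%N ->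
  \sum_(j < N.+1) (x / (1 - x)) ^+ j * ((1 - x) ^+ n *
     (if (j <= n)%N then ('C(n - k, n - j)%:R : F) else 0)) = x ^+ k.
Proof.
move=> x1 le_kn le_nN.
rewrite -(big_mkord xpredT (fun j => (x / (1 - x)) ^+ j * ((1 - x) ^+ n *
     (if (j <= n)%N then ('C(n - k, n - j)%:R : F) else 0)))).
rewrite (@big_cat_nat _ _ _ n.+1 0 N.+1) //= [X in _ + X = _]big_nat_cond.
rewrite [X in _ + X = _]big1 ?addr0; last first.
  by move=> j /andP[/andP[lt_nj _] _]; rewrite leqNgt lt_nj /= !mulr0.
rewrite (@big_cat_nat _ _ _ k 0 n.+1) //=; last by lia.
rewrite big_nat_cond big1 ?add0r; last first.
  by move=> j /andP[/andP[_ lt_jk] _]; rewrite bin_small ?if_same ?mulr0 //; lia.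
rewrite -{1}[k]add0n big_addn.
have -> : (n.+1 - k = (n - k).+1)%N by lia.
rewrite big_mkord (eq_bigr (fun i : 'I_(n - k).+1 =>
  x ^+ k * ((1 - x) ^+ (n - k - i) * x ^+ i *+ 'C(n - k, i)))).
  by rewrite -mulr_sumr -exprDn subrK expr1n mulr1.
move=> i _; have le_i : (i <= n - k)%N by rewrite -ltnS.
have -> : (i + k <= n)%N by lia.
rewrite (_ : (n - (i + k) = n - k - i)%N); last by lia.
rewrite bin_sub // -mulr_natr.
have -> : (1 - x) ^+ n = (1 - x) ^+ (i + k) * (1 - x) ^+ (n - k - i).
  by rewrite -exprD; congr (_ ^+ _); lia.
by rewrite expr_div_n exprD; field; rewrite expf_neq0.
Qed.

Section ShefferShift.
Variable C : numFieldType.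
Variables (g fb : nat -> C).
Hypothesis g0 : g 0%N != 0.
Hypothesis fb0 : fb 0%N = 0.

Local Notation PC := {poly C}.

Lemma fact_polyC_unit k : (k`!%:R : PC) \is a GRing.unit.
Proof. by rewrite -(rmorph_nat (@polyC C)) rmorph_unit // unitfE natf_fact_neq0. Qed.

Definition fb_const : fps PC := fun m => (fb m)%:P.
Definition fb_X : fps PC := fun m => 'X * (fb m)%:P.
Definition exp_fb : fps PC := fcomp (fexp PC) fb_const.
Definition exp_xfb : fps PC := fcomp (fexp PC) fb_X.
Definition inv_g_fb : fps PC := fps_inv (fmap polyC (fcomp g fb)).

Definition sheffer_egf : fps PC := inv_g_fb * exp_xfb.

Definition shift_x : {rmorphism PC -> PC} := comp_poly ('X + 1).

Definition fwd_diff_fps (a : fps PC) : fps PC := map_fps shift_x a - a.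

Lemma coef_iter_fwd_diff_fps j a n : iter j fwd_diff_fps a n = iter j (@fwd_diff C) (a n).
Proof. by elim: j => //= j IH; rewrite /fwd_diff_fps coef_fps_sub coef_map_fps IH. Qed.

Lemma inv_g_fb_unit : fmap polyC (fcomp g fb) 0%N \is a GRing.unit.
Proof. by rewrite /fmap fcomp0 rmorph_unit // unitfE. Qed.

Lemma shift_exp_fb : map_fps shift_x exp_fb = exp_fb.
Proof.
rewrite /exp_fb map_fps_fcomp fmap_fexp; last exact: fact_polyC_unit.
by congr fcomp; apply: funext => m; rewrite coef_map_fps /= comp_polyC.
Qed.

Lemma shift_exp_xfb : map_fps shift_x exp_xfb = exp_xfb * exp_fb.
Proof.
rewrite /exp_xfb map_fps_fcomp fmap_fexp; last exact: fact_polyC_unit.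
have -> : map_fps shift_x fb_X = fb_X + fb_const.
  apply: funext => m; rewrite coef_map_fps coef_fps_add /= comp_polyM comp_polyX.
  by rewrite comp_polyC mulrDl mul1r.
by rewrite (fexpD fact_polyC_unit) // /fb_X /fb_const fb0 ?mulr0.
Qed.

Lemma shift_inv_g_fb : map_fps shift_x inv_g_fb = inv_g_fb.
Proof.
rewrite /inv_g_fb rmorph_fps_inv ?inv_g_fb_unit //; last first.
  by rewrite /= /map_fps /fmap comp_polyC; exact: inv_g_fb_unit.
by congr fps_inv; apply: funext => m; rewrite /= /map_fps /fmap comp_polyC.
Qed.

Lemma iter_fwd_diff_sheffer_egf j :
  iter j fwd_diff_fps sheffer_egf = (exp_fb - 1) ^+ j * sheffer_egf.
Proof.
elim: j => [|j IH]; first by rewrite mul1r.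
rewrite iterS IH /fwd_diff_fps /sheffer_egf !rmorphM rmorphXn rmorphB rmorph1 /=.
by rewrite shift_exp_fb shift_inv_g_fb shift_exp_xfb exprS; ring.
Qed.

End ShefferShift.

Section EulerianEgf.
Variable C : numFieldType.
Variables (g f fb : nat -> C) (p : nat -> {poly C}) (A : nat -> nat -> C).
Hypothesis g0 : g 0%N != 0.
Hypothesis fbK : is_comp_inverse f fb.
Hypothesis p_sheffer : is_sheffer g f p.
Hypothesis A_eulerian : is_eulerian p A.

Local Notation PC := {poly C}.
Local Notation K := {fraction PC}.

Definition x : K := tofrac ('X : PC).
Definition polyK : {rmorphism C -> K} := @tofrac PC \o polyC.
Definition u : fps K := fcomp (fmap (fun c => tofrac c%:P) fb) (fscale (1 - x) (fX K)).
Definition E : fps K := fcomp (fexp K) u.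
Definition G : fps K := fps_inv (fcomp (fmap (fun c => tofrac c%:P) g) u).
Definition eulerian_egf : fps K := fun n => tofrac (eulerian_poly A n) / (n`!)%:R.

Definition eval1 : {rmorphism PC -> K} := @tofrac PC \o polyC \o horner_eval 1.

Definition specialize : {rmorphism fps PC -> fps K} :=
  rescale_fps (1 - x) \o map_fps eval1.

Lemma fb0 : fb 0%N = 0. Proof. by case: fbK. Qed.

Lemma one_sub_x_neq0 : 1 - x != 0.
Proof.
rewrite /x -(rmorph1 (@tofrac PC)) -rmorphB tofrac_eq0 subr_eq0.
by apply/eqP => /(congr1 (coefp 1)) /=; rewrite coef1 coefX /= => /eqP; rewrite eq_sym oner_eq0.
Qed.

Lemma u_rescale : u = rescale_fps (1 - x) (map_fps polyK fb).
Proof. by rewrite /u -rescale_fps_fX -rescale_fps_fcomp fcomp_fX. Qed.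

Lemma E0 : E 0%N = 1.
Proof. by rewrite /E fcomp0 /fexp invr1. Qed.

Lemma specialize_exp (h : fps PC) :
  map_fps eval1 h = map_fps polyK fb -> specialize (fcomp (fexp PC) h) = E.
Proof.
move=> eval_h; rewrite /= map_fps_fcomp fmap_fexp ?eval_h; last exact: fact_polyC_unit.
by rewrite rescale_fps_fcomp -u_rescale.
Qed.

Lemma specialize_exp_fb : specialize (exp_fb fb) = E.
Proof.
by apply: specialize_exp; apply: funext => m; rewrite !coef_map_fps /= horner_evalE hornerC.
Qed.

Lemma specialize_exp_xfb : specialize (exp_xfb fb) = E.
Proof.
apply: specialize_exp; apply: funext => m.
by rewrite !coef_map_fps /= horner_evalE hornerM hornerX hornerC mul1r.
Qed.

Lemma specialize_inv_g_fb : specialize (inv_g_fb g fb) = G.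
Proof.
have polyK_unit c : c != 0 -> polyK c \is a GRing.unit by rewrite unitfE fmorph_eq0.
rewrite /= /inv_g_fb rmorph_fps_inv ?inv_g_fb_unit //; last first.
  by rewrite /= /map_fps /fmap fcomp0 /= horner_evalE hornerC polyK_unit.
rewrite rmorph_fps_inv; last 2 first.
- by rewrite /= /map_fps /fmap fcomp0 /= horner_evalE hornerC polyK_unit.
- by rewrite /= coef_rescale_fps expr0 mul1r /map_fps /fmap fcomp0 /= horner_evalE hornerC polyK_unit.
rewrite /G u_rescale -rescale_fps_fcomp; congr (fps_inv (rescale_fps _ _)).
transitivity (map_fps polyK (fcomp g fb)); last exact: map_fps_fcomp.
by apply: funext => m; rewrite /= /map_fps /fmap /= horner_evalE hornerC.
Qed.

Lemma specialize_sheffer_egf : specialize (sheffer_egf g fb) = G * E.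
Proof. by rewrite rmorphM specialize_inv_g_fb specialize_exp_xfb. Qed.

Lemma coef_specialize a n : specialize a n = (1 - x) ^+ n * polyK (a n).[1].
Proof. by []. Qed.

Lemma coef_fwd_diff_sheffer_egf j n : ((exp_fb fb - 1) ^+ j * sheffer_egf g fb) n =
  iter j (@fwd_diff C) ((n`!%:R)^-1 * p n).
Proof. by rewrite -iter_fwd_diff_sheffer_egf ?fb0 // coef_iter_fwd_diff_fps (p_sheffer fbK). Qed.

Lemma coef_exp_sub1_pow j n : ((E - 1) ^+ j * (G * E)) n =
  (1 - x) ^+ n * ((n`!%:R)^-1 * \sum_(k < n.+1) polyK (A n k) *
                    (if (j <= n)%N then 'C(n - k, n - j)%:R else 0)).
Proof.
rewrite -specialize_sheffer_egf -specialize_exp_fb -(rmorph1 specialize) -rmorphB.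
rewrite -rmorphXn -rmorphM coef_specialize coef_fwd_diff_sheffer_egf A_eulerian.
congr (_ * _).
rewrite -(rmorph_nat (@polyC C)) polyCV mul_polyC iter_fwd_diffZ iter_fwd_diff_sum.
rewrite hornerZ horner_sum rmorphM fmorphV rmorph_nat rmorph_sum; congr (_ * _).
apply: eq_bigr => k _; rewrite hornerZ rmorphM iter_fwd_diff_binpoly; congr (_ * _).
case: ifP => _; last by rewrite horner0 rmorph0.
by rewrite horner_binpoly1 ?rmorph_nat // -ltnS.
Qed.

Definition z : fps K := fpsC (x / (1 - x)) * (E - 1).

Lemma coef_eulerian_egf N n : (n <= N)%N ->
  eulerian_egf n = (\sum_(j < N.+1) z ^+ j * (G * E)) n.
Proof.
move=> le_nN; rewrite coef_fps_sum.
under eq_bigr => j _ do rewrite /z exprMn -fpsCX -mulrA coef_fpsCM coef_exp_sub1_pow.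
set c := (n`!%:R)^-1.
rewrite (eq_bigr (fun j : 'I_N.+1 => c * \sum_(k < n.+1) polyK (A n k) *
   ((x / (1 - x)) ^+ j * ((1 - x) ^+ n *
     (if (j <= n)%N then ('C(n - k, n - j)%:R : K) else 0))))); last first.
  move=> j _; set T := \sum_(k < n.+1) _.
  transitivity (c * ((x / (1 - x)) ^+ j * (1 - x) ^+ n * T)); first by ring.
  by congr (_ * _); rewrite /T mulr_sumr; apply: eq_bigr => k _; rewrite [LHS]mulrCA !mulrA.
rewrite -mulr_sumr exchange_big /= (eq_bigr (fun k : 'I_n.+1 => polyK (A n k) * x ^+ k)).
  rewrite /eulerian_egf mulrC /eulerian_poly rmorph_sum; congr (_ * _).
  by apply: eq_bigr => k _; rewrite /= -mul_polyC tofracM tofracXn.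
by move=> k _; rewrite -mulr_sumr sum_binomial_ratio ?one_sub_x_neq0 // -ltnS.
Qed.

(* Modulo t^(n+1), eulerian_egf is the geometric series in z times G E,
   and 1 - x E = (1 - x)(1 - z) sums it. *)
Lemma eulerian_egf_mul : eulerian_egf * (1 - fpsC x * E) = fpsC (1 - x) * E * G.
Proof.
have z0 : z 0%N = 0 by rewrite /z coef_fpsCM coef_fps_sub E0 subrr mulr0.
have one_sub_xE : 1 - fpsC x * E = fpsC (1 - x) * (1 - z).
  have xy : fpsC (1 - x) * fpsC (x / (1 - x)) = fpsC x.
    by rewrite fpsCM mulrC divfK ?one_sub_x_neq0.
  rewrite /z mulrBr mulrA xy fpsCB (_ : fpsC 1 = 1) // mulr1 mulrBr mulr1.
  by rewrite opprB addrA subrK.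
apply: funext => n.
rewrite (@coef_fps_mul_eq _ _ ((\sum_(j < n.+1) z ^+ j) * (G * E)) _ (1 - fpsC x * E));
  last 2 first.
- by move=> i le_in; rewrite (coef_eulerian_egf le_in) mulr_suml.
- by [].
have -> : (\sum_(j < n.+1) z ^+ j) * (G * E) * (1 - fpsC x * E) =
          (1 - z ^+ n.+1) * (fpsC (1 - x) * E * G).
  have geom : (1 - z) * \sum_(j < n.+1) z ^+ j = 1 - z ^+ n.+1.
    by rewrite -[1 - z]opprB mulNr -subrX1 opprB.
  by rewrite one_sub_xE -geom; ring.
have vanish : vanishes_below n.+1 (z ^+ n.+1 * (fpsC (1 - x) * E * G)).
  exact/vanishes_below_mulr/vanishes_below_exp.
by rewrite mulrBl mul1r coef_fps_sub vanish ?subr0.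
Qed.

Lemma eulerian_egfE : eulerian_egf =
  fmul (fmul (fscale (1 - x) E) G) (fps_inv (fsub (fconst 1) (fscale x E))).
Proof.
have -> : fsub (fconst 1) (fscale x E) = 1 - fpsC x * E.
  by apply: funext => n; rewrite coef_fps_sub coef_fpsCM.
rewrite fscaleE !fmulE -eulerian_egf_mul -mulrA fps_invP ?mulr1 //.
by rewrite coef_fps_sub coef_fpsCM E0 coef_fps1 mulr1 unitfE one_sub_x_neq0.
Qed.

End EulerianEgf.

(* The hypotheses f(0) = 0 and f'(0) != 0 only ensure that fb exists;
   the argument uses fb directly. *)
Theorem theorem3p3 (C : numClosedFieldType) (g f fb : nat -> C)
  (p : nat -> {poly C}) (A : nat -> nat -> C) :
  g 0%N != 0 -> f 0%N = 0 -> f 1%N != 0 ->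
  is_comp_inverse f fb ->
  is_sheffer g f p ->
  is_eulerian p A ->
  let K := {fraction {poly C}} in
  let x : K := tofrac ('X : {poly C}) in
  let emb : C -> K := fun c => tofrac c%:P in
  let u : nat -> K := fcomp (fmap emb fb) (fscale (1 - x) (fX K)) in
  let E : nat -> K := fcomp (fexp K) u in
  (fun n => tofrac (eulerian_poly A n) / (n`!)%:R)
  = fmul (fmul (fscale (1 - x) E) (fps_inv (fcomp (fmap emb g) u)))
         (fps_inv (fsub (fconst 1) (fscale x E))).
Proof.
move=> g0 _ _ fbK p_sheffer A_eulerian.
exact: (eulerian_egfE g0 fbK p_sheffer A_eulerian).
Qed.
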